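(* Assume (H1) and (H2), and suppose that the limit $$b=\lim_{z\to\infty}q'(z)\int_z^\infty\frac{dx}{q(x)}$$ exists in $\mathbb R$. Then $b\ge0$, $$\lim_{z\to\infty}\frac{q'(z)}{q(z)}\sqrt{\int_z^\infty\frac{dx}{q(x)}}=0,$$ and $$\lim_{z\to\infty}\frac{\int_z^\infty q(x)^{-1}dx}{q(z)^2\int_z^\infty q(x)^{-3}dx}=2b+1.$$
   Context: Let $q\in C^1([0,\infty))$ and $\gamma(y)=2\int_0^yq$. (H1): $\int_0^\infty e^{\gamma(y)}\int_y^\infty e^{-\gamma(\xi)}d\xi\,dy<\infty$. (H2): $\lim_{x\to\infty}q(x)=\infty$ and $\lim_{x\to\infty}q'(x)/q(x)^2=0$. (Under (H1),(H2), $\int_z^\infty q^{-1}<\infty$ for large $z$.) *)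

From Stdlib Require Import Reals Lra Classical ClassicalEpsilon.
Open Scope R_scope.

(* Riemann integral of f over [a,b] as a total function:
   the Stdlib RiemannInt when f is Riemann integrable on [a,b], junk 0 otherwise.
   (RiemannInt does not depend on the integrability proof, RiemannInt_P5.) *)
Definition Rint (f : R -> R) (a b : R) : R :=
  match excluded_middle_informative (exists _ : Riemann_integrable f a b, True) with
  | left H => RiemannInt (proj1_sig (constructive_indefinite_description _ H))
  | right _ => 0
  end.

Definition lim_infty (f : R -> R) (l : R) : Prop :=
  forall eps, 0 < eps -> exists M, forall x, M <= x -> Rabs (f x - l) < eps.

Definition tends_infty (f : R -> R) : Prop :=
  forall A, exists M, forall x, M <= x -> A < f x.

Definition improper_int (f : R -> R) (a L : R) : Prop :=
  (forall b, a <= b -> exists _ : Riemann_integrable f a b, True) /\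
  lim_infty (fun b => Rint f a b) L.

(* Value of int_a^infty f (junk 0 if it does not converge). *)
Definition Iinf (f : R -> R) (a : R) : R :=
  match excluded_middle_informative (exists L, improper_int f a L) with
  | left H => proj1_sig (constructive_indefinite_description _ H)
  | right _ => 0
  end.

Definition gamma (q : R -> R) (y : R) : R := 2 * Rint q 0 y.

Definition H1 (q : R -> R) : Prop :=
  (forall y, 0 <= y -> exists L, improper_int (fun xi => exp (- gamma q xi)) y L) /\
  exists L, improper_int
              (fun y => exp (gamma q y) * Iinf (fun xi => exp (- gamma q xi)) y) 0 L.

(* Hypothesis (H2), dq being the derivative q' *)
Definition H2 (q dq : R -> R) : Prop :=
  tends_infty q /\ lim_infty (fun x => dq x / (q x)^2) 0.

(* Since q'/q^2 -> 0, q at most doubles on [y, y + 1/q(y)] for large y.  Hence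
   gamma grows by at most 4 there and e^{gamma(y)} int_y^oo e^{-gamma} >= e^{-4}/q(y),
   so (H1) makes I(z) = int_z^oo 1/q finite, and so is J(z) = int_z^oo 1/q^3.  The same
   estimate gives q^2 I -> oo; as q' I -> b, this yields (q'/q) sqrt I = q' I / (q sqrt I) -> 0.
   If b were negative, q' < 0 eventually, contradicting q -> oo.  Finally
   (I/q^2)' = -(1 + 2 q' I)/q^3 and J' = -1/q^3, so L'Hopital's rule at +oo gives
   I/(q^2 J) -> 1 + 2b. *)

From Stdlib Require Import Reals Lra Classical ClassicalEpsilon.
From Coquelicot Require Import Coquelicot.
Open Scope R_scope.

(** * Limits at +oo *)

Lemma lim_infty_is_lim f l : lim_infty f l <-> is_lim f p_infty l.
Proof.
  rewrite <- is_lim_spec; split.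
  - intros H eps. destruct (H eps (cond_pos eps)) as [M HM].
    exists M; intros x Hx; apply HM; lra.
  - intros H eps Heps. destruct (H (mkposreal eps Heps)) as [M HM].
    exists (M + 1); intros x Hx; apply HM; simpl; lra.
Qed.

Lemma tends_infty_is_lim f : tends_infty f <-> is_lim f p_infty p_infty.
Proof.
  rewrite <- is_lim_spec; split.
  - intros H A. destruct (H A) as [M HM]. exists M; intros x Hx; apply HM; lra.
  - intros H A. destruct (H A) as [M HM]. exists (M + 1); intros x Hx; apply HM; lra.
Qed.

Lemma lim_infty_ext_ge f g a l :
  (forall x, a <= x -> f x = g x) -> lim_infty f l -> lim_infty g l.
Proof.
  intros Hfg Hf eps Heps. destruct (Hf eps Heps) as [M HM].
  exists (Rmax M a); intros x Hx.
  rewrite <- Hfg by (eapply Rle_trans; [apply Rmax_r | exact Hx]).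
  apply HM; eapply Rle_trans; [apply Rmax_l | exact Hx].
Qed.

Lemma lim_infty_unique f l1 l2 : lim_infty f l1 -> lim_infty f l2 -> l1 = l2.
Proof.
  rewrite !lim_infty_is_lim; intros H1 H2.
  apply is_lim_unique in H1, H2. rewrite H1 in H2. now injection H2.
Qed.

Lemma lim_infty_le u v lu lv : lim_infty u lu -> lim_infty v lv ->
  (exists M, forall x, M <= x -> u x <= v x) -> lu <= lv.
Proof.
  rewrite !lim_infty_is_lim; intros Hu Hv [M HM].
  apply (is_lim_le_loc u v p_infty lu lv); auto.
  exists M; intros x Hx; apply HM; lra.
Qed.

Lemma lim_infty_of_sqr f : lim_infty (fun x => f x ^ 2) 0 -> lim_infty f 0.
Proof.
  intros Hf eps Heps. destruct (Hf (eps ^ 2) (pow_lt _ _ Heps)) as [M HM].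
  exists M; intros x Hx. specialize (HM x Hx).
  rewrite Rminus_0_r, Rabs_pos_eq in HM by apply pow2_ge_0.
  rewrite Rminus_0_r. apply Rabs_def1; nra.
Qed.

(** * Riemann and improper integrals *)

Lemma Rint_RInt (f : R -> R) a b : ex_RInt f a b -> Rint f a b = RInt f a b.
Proof.
  intros Hf. unfold Rint.
  destruct excluded_middle_informative as [H | H].
  - destruct constructive_indefinite_description as [pr Hpr]; simpl.
    symmetry; apply RInt_Reals.
  - exfalso; apply H. exists (ex_RInt_Reals_0 _ _ _ Hf); trivial.
Qed.

Lemma ex_RInt_continuous_ge (f : R -> R) a b :
  (forall x, a <= x -> continuous f x) -> a <= b -> ex_RInt f a b.
Proof.
  intros Hf Hab. apply (ex_RInt_continuous (V := R_CompleteNormedModule) f).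
  intros x Hx. apply Hf. rewrite Rmin_left in Hx; lra.
Qed.

Lemma RInt_Chasles_minus (f : R -> R) a b c :
  a <= b <= c -> ex_RInt f a c -> RInt f b c = RInt f a c - RInt f a b.
Proof.
  intros Habc Hac.
  rewrite <- (RInt_Chasles f a b c (ex_RInt_Chasles_1 f a b c Habc Hac)
                (ex_RInt_Chasles_2 f a b c Habc Hac)).
  unfold plus; simpl; lra.
Qed.

Lemma RInt_const_R a b c : RInt (fun _ => c) a b = (b - a) * c.
Proof. exact (RInt_const (V := R_CompleteNormedModule) a b c). Qed.

Lemma RInt_ge_const (f : R -> R) a b m :
  a <= b -> ex_RInt f a b -> (forall x, a <= x <= b -> m <= f x) -> (b - a) * m <= RInt f a b.
Proof.
  intros Hab Hf Hm. rewrite <- RInt_const_R.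
  apply RInt_le; auto; [apply ex_RInt_const |]. intros; apply Hm; lra.
Qed.

Lemma RInt_le_const (f : R -> R) a b M :
  a <= b -> ex_RInt f a b -> (forall x, a <= x <= b -> f x <= M) -> RInt f a b <= (b - a) * M.
Proof.
  intros Hab Hf HM. rewrite <- RInt_const_R.
  apply RInt_le; auto; [apply ex_RInt_const |]. intros; apply HM; lra.
Qed.

Lemma improper_int_ex_RInt (f : R -> R) a L b : improper_int f a L -> a <= b -> ex_RInt f a b.
Proof. intros [Hf _] Hb. destruct (Hf b Hb) as [pr _]. now apply ex_RInt_Reals_1. Qed.

Lemma improper_int_RInt (f : R -> R) a L :
  improper_int f a L <->
  (forall b, a <= b -> ex_RInt f a b) /\ lim_infty (RInt f a) L.
Proof.
  split.
  - intros Hf. split; [intros; eapply improper_int_ex_RInt; eauto |].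
    apply (lim_infty_ext_ge (fun b => Rint f a b) _ a); [| apply Hf].
    intros b Hb. apply Rint_RInt. eapply improper_int_ex_RInt; eauto.
  - intros [Hex Hl]. split.
    + intros b Hb. exists (ex_RInt_Reals_0 _ _ _ (Hex b Hb)); trivial.
    + apply (lim_infty_ext_ge (RInt f a) _ a); auto.
      intros b Hb. symmetry; apply Rint_RInt, Hex, Hb.
Qed.

Lemma Iinf_eq (f : R -> R) a L : improper_int f a L -> Iinf f a = L.
Proof.
  intros Hf. unfold Iinf. destruct excluded_middle_informative as [H | H].
  - destruct constructive_indefinite_description as [L' HL'].
    eapply lim_infty_unique; [apply HL' | apply Hf].
  - exfalso; apply H; eauto.
Qed.

Section NonnegIntegrand.

Variables (f : R -> R) (a : R).
Hypothesis f_nonneg : forall x, a <= x -> 0 <= f x.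
Hypothesis f_ex_RInt : forall b, a <= b -> ex_RInt f a b.

Lemma RInt_nondecreasing x y : a <= x <= y -> RInt f a x <= RInt f a y.
Proof.
  intros Hxy.
  assert (Hfy := f_ex_RInt y ltac:(lra)).
  assert (Hxy_pos : 0 <= RInt f x y).
  { apply RInt_ge_0; [lra | apply (ex_RInt_Chasles_2 f a); [lra | auto] |].
    intros; apply f_nonneg; lra. }
  rewrite (RInt_Chasles_minus f a x y) in Hxy_pos by (auto; lra); lra.
Qed.

Lemma RInt_le_improper L b : improper_int f a L -> a <= b -> RInt f a b <= L.
Proof.
  intros Hf Hb. apply (lim_infty_le (fun _ => RInt f a b) (RInt f a)).
  - apply lim_infty_is_lim, is_lim_const.
  - apply improper_int_RInt, Hf.
  - exists b; intros x Hx. apply RInt_nondecreasing; lra.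
Qed.

Lemma improper_int_of_bounded M :
  (forall b, a <= b -> RInt f a b <= M) -> exists L, improper_int f a L.
Proof.
  intros HM.
  set (E := fun y => exists b, a <= b /\ y = RInt f a b).
  assert (HE : bound E) by (exists M; intros y [b [Hb ->]]; auto).
  assert (Ha : exists y, E y) by (exists (RInt f a a), a; split; [lra | auto]).
  destruct (completeness E HE Ha) as [L [HL1 HL2]].
  exists L. apply improper_int_RInt. split; auto.
  intros eps Heps.
  destruct (classic (exists b, a <= b /\ L - eps < RInt f a b)) as [[b [Hb Hlt]] | Hn].
  - exists b. intros x Hx.
    assert (RInt f a b <= RInt f a x) by (apply RInt_nondecreasing; lra).
    assert (RInt f a x <= L) by (apply HL1; exists x; split; [lra | auto]).
    apply Rabs_def1; lra.
  - exfalso. assert (L <= L - eps); [| lra].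
    apply HL2. intros y [b [Hb ->]]. apply Rnot_lt_le. intros Hlt. eauto.
Qed.

End NonnegIntegrand.

Lemma improper_int_of_le_scal (f g : R -> R) a c k Lg :
  a <= c -> 0 <= k -> improper_int g a Lg -> (forall x, a <= x -> 0 <= g x) ->
  (forall x, c <= x -> continuous f x) -> (forall x, c <= x -> 0 <= f x <= k * g x) ->
  exists L, improper_int f c L.
Proof.
  intros Hac Hk Hg g_nonneg f_cont Hfg.
  assert (f_ex : forall b, c <= b -> ex_RInt f c b) by (intros; apply ex_RInt_continuous_ge; auto).
  assert (g_ex : forall b, a <= b -> ex_RInt g a b) by (intros; eapply improper_int_ex_RInt; eauto).
  apply (improper_int_of_bounded f c (fun x Hx => proj1 (Hfg x Hx)) f_ex (k * (Lg - RInt g a c))).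
  intros b Hb.
  assert (Hgcb : ex_RInt g c b) by (apply (ex_RInt_Chasles_2 g a); [lra | apply g_ex; lra]).
  assert (Hscal : RInt (fun x => k * g x) c b = k * RInt g c b) by exact (RInt_scal g c b k Hgcb).
  apply Rle_trans with (RInt (fun x => k * g x) c b).
  - apply RInt_le; [lra | apply f_ex; lra | exact (ex_RInt_scal g c b k Hgcb) |].
    intros x Hx; apply Hfg; lra.
  - rewrite Hscal, (RInt_Chasles_minus g a c b) by (try apply g_ex; lra).
    apply Rmult_le_compat_l; [exact Hk |].
    assert (RInt g a b <= Lg) by (apply (RInt_le_improper g a); [exact g_nonneg | exact g_ex | exact Hg | lra]).
    simpl; lra.
Qed.

Section TailIntegral.

Variables (f : R -> R) (a L : R).
Hypothesis f_nonneg : forall x, a <= x -> 0 <= f x.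
Hypothesis f_improper : improper_int f a L.

Let f_ex_RInt b : a <= b -> ex_RInt f a b.
Proof. now apply improper_int_ex_RInt with L. Qed.

Lemma improper_int_tail z : a <= z -> improper_int f z (L - RInt f a z).
Proof.
  intros Hz. apply improper_int_RInt. split.
  - intros b Hb. apply (ex_RInt_Chasles_2 f a); [lra | apply f_ex_RInt; lra].
  - apply (lim_infty_ext_ge (fun b => RInt f a b - RInt f a z) _ z).
    + intros b Hb. symmetry; apply RInt_Chasles_minus; [lra | apply f_ex_RInt; lra].
    + apply lim_infty_is_lim, is_lim_minus'; [| apply is_lim_const].
      apply lim_infty_is_lim, improper_int_RInt, f_improper.
Qed.

Lemma Iinf_tail z : a <= z -> Iinf f z = L - RInt f a z.
Proof. intros Hz. apply Iinf_eq, improper_int_tail, Hz. Qed.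

Lemma Iinf_lim0 : lim_infty (Iinf f) 0.
Proof.
  apply (lim_infty_ext_ge (fun z => L - RInt f a z) _ a).
  - intros z Hz; symmetry; apply Iinf_tail, Hz.
  - replace 0 with (L - L) by ring.
    apply lim_infty_is_lim, is_lim_minus'; [apply is_lim_const |].
    apply lim_infty_is_lim, improper_int_RInt, f_improper.
Qed.

Lemma RInt_le_Iinf z b : a <= z <= b -> RInt f z b <= Iinf f z.
Proof.
  intros Hzb. rewrite (Iinf_eq _ _ _ (improper_int_tail z ltac:(lra))).
  apply (RInt_le_improper f z); try lra.
  - intros x Hx; apply f_nonneg; lra.
  - intros c Hc. apply (ex_RInt_Chasles_2 f a); [lra | apply f_ex_RInt; lra].
  - apply improper_int_tail; lra.
Qed.

Lemma Iinf_nonneg z : a <= z -> 0 <= Iinf f z.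
Proof.
  intros Hz. apply Rle_trans with (RInt f z z); [right; symmetry; apply (RInt_point z f) | apply RInt_le_Iinf; lra].
Qed.

Hypothesis f_cont : forall x, a <= x -> continuous f x.

Lemma Iinf_derivable z : a < z -> derivable_pt_lim (Iinf f) z (- f z).
Proof.
  intros Hz. apply is_derive_Reals.
  assert (Hball : locally z (fun t => a < t)).
  { assert (Hd : 0 < z - a) by lra. exists (mkposreal _ Hd). intros t Ht.
    apply Rabs_def2 in Ht; simpl in Ht. unfold minus, plus, opp in Ht; simpl in Ht; lra. }
  apply (is_derive_ext_loc (fun t => L - RInt f a t)).
  { apply (filter_imp (fun t => a < t)); auto.
    intros t Ht; symmetry; apply Iinf_tail; lra. }
  apply is_derive_Reals. replace (- f z) with (0 - f z) by ring.
  apply (derivable_pt_lim_minus (fct_cte L)); [apply derivable_pt_lim_const |].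
  apply is_derive_Reals, (is_derive_RInt f (RInt f a) a z); [| apply f_cont; lra].
  apply (filter_imp (fun t => a < t)); auto.
  intros t Ht. apply (RInt_correct (V := R_CompleteNormedModule)), f_ex_RInt; lra.
Qed.

End TailIntegral.

(** * Mean value theorems and L'Hopital's rule at +oo *)

Lemma continuous_of_derivable_pt_lim f x l : derivable_pt_lim f x l -> continuous f x.
Proof.
  intros Hf. apply continuity_pt_filterlim, derivable_continuous_pt. exists l; exact Hf.
Qed.

Lemma mean_value f df x y :
  x <= y -> (forall c, x <= c <= y -> derivable_pt_lim f c (df c)) ->
  exists c, x <= c <= y /\ f y - f x = df c * (y - x).
Proof.
  intros Hxy Hf. destruct (MVT_gen f x y df) as [c [Hc Heq]].
  - intros z Hz. rewrite Rmin_left, Rmax_right in Hz by lra. apply is_derive_Reals, Hf; lra.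
  - intros z Hz. rewrite Rmin_left, Rmax_right in Hz by lra.
    apply continuity_pt_filterlim, (continuous_of_derivable_pt_lim _ _ (df z)), Hf; lra.
  - rewrite Rmin_left, Rmax_right in Hc by lra. eauto.
Qed.

Lemma cauchy_mean_value f g df dg x y :
  x < y -> (forall c, x <= c <= y -> derivable_pt_lim f c (df c)) ->
  (forall c, x <= c <= y -> derivable_pt_lim g c (dg c)) ->
  exists c, x <= c <= y /\ (f y - f x) * dg c = (g y - g x) * df c.
Proof.
  intros Hxy Hf Hg.
  destruct (mean_value (fun t => f t * (g y - g x) - g t * (f y - f x))
              (fun t => df t * (g y - g x) - dg t * (f y - f x)) x y) as [c [Hc Heq]].
  - lra.
  - intros c Hc.
    apply (derivable_pt_lim_minus (fun t => f t * (g y - g x)) (fun t => g t * (f y - f x)));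
      apply derivable_pt_lim_scal_right; auto.
  - exists c; split; auto.
    assert (H0 : (df c * (g y - g x) - dg c * (f y - f x)) * (y - x) = 0) by (rewrite <- Heq; ring).
    apply Rmult_integral in H0 as [H0 | H0]; lra.
Qed.

Lemma derivable_neg_decreasing f df a x y :
  (forall c, a <= c -> derivable_pt_lim f c (df c)) -> (forall c, a <= c -> df c < 0) ->
  a <= x < y -> f y < f x.
Proof.
  intros Hf Hdf Hxy.
  destruct (mean_value f df x y) as [c [Hc Heq]]; [lra | intros; apply Hf; lra |].
  assert (df c < 0) by (apply Hdf; lra). nra.
Qed.

Section LHopitalInfty.

Variables f g df dg : R -> R.
Variable a : R.
Hypothesis f_deriv : forall x, a <= x -> derivable_pt_lim f x (df x).
Hypothesis g_deriv : forall x, a <= x -> derivable_pt_lim g x (dg x).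
Hypothesis dg_neg : forall x, a <= x -> dg x < 0.
Hypothesis f_lim : lim_infty f 0.
Hypothesis g_lim : lim_infty g 0.

Lemma lhopital_g_nonincreasing x y : a <= x <= y -> g y <= g x.
Proof.
  intros Hxy. destruct (Req_dec x y) as [-> | Hne]; [lra |].
  left; apply (derivable_neg_decreasing g dg a); auto; lra.
Qed.

Lemma lhopital_g_pos z : a <= z -> 0 < g z.
Proof.
  intros Hz.
  assert (0 <= g (z + 1)).
  { apply (lim_infty_le g (fun _ => g (z + 1))); auto.
    - apply lim_infty_is_lim, is_lim_const.
    - exists (z + 1); intros; apply lhopital_g_nonincreasing; lra. }
  assert (g (z + 1) < g z) by (apply (derivable_neg_decreasing g dg a); auto; lra).
  lra.
Qed.

Lemma lhopital_increment l e z w :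
  a <= z <= w -> (forall c, z <= c -> Rabs (df c / dg c - l) <= e) ->
  Rabs (f w - l * g w - (f z - l * g z)) <= e * (g z - g w).
Proof.
  intros Hzw Hratio. destruct (Req_dec z w) as [<- | Hne].
  { replace (f z - l * g z - (f z - l * g z)) with 0 by ring.
    rewrite Rabs_R0; lra. }
  destruct (cauchy_mean_value f g df dg z w) as [c [Hc Heq]];
    [lra | intros; apply f_deriv; lra | intros; apply g_deriv; lra |].
  assert (Hdg := dg_neg c ltac:(lra)).
  assert (Hfw : f w - f z = df c / dg c * (g w - g z)).
  { apply (Rmult_eq_reg_r (dg c)); [rewrite Heq; field |]; lra. }
  replace (f w - l * g w - (f z - l * g z)) with ((df c / dg c - l) * (g w - g z)) by lra.
  assert (g w <= g z) by (apply lhopital_g_nonincreasing; lra).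
  rewrite Rabs_mult, (Rabs_left1 (g w - g z)), Ropp_minus_distr by lra.
  apply Rmult_le_compat_r; [lra | apply Hratio; lra].
Qed.

(* Let [w -> +oo] in [lhopital_increment]: [f w] and [g w] vanish. *)
Lemma lhopital_bound l e z :
  a <= z -> (forall c, z <= c -> Rabs (df c / dg c - l) <= e) ->
  Rabs (f z - l * g z) <= e * g z.
Proof.
  intros Hz Hratio.
  apply (lim_infty_le (fun w => Rabs (f w - l * g w - (f z - l * g z)))
                      (fun w => e * (g z - g w))).
  - replace (Rabs (f z - l * g z)) with (Rabs (0 - l * 0 - (f z - l * g z)))
      by (rewrite <- Rabs_Ropp; f_equal; ring).
    apply lim_infty_is_lim.
    apply (is_lim_comp_continuous (fun w => f w - l * g w - (f z - l * g z)) Rabs);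
      [| apply continuous_Rabs].
    apply is_lim_minus'; [| apply is_lim_const].
    apply is_lim_minus'; [apply lim_infty_is_lim, f_lim |].
    apply (is_lim_scal_l g l p_infty 0), lim_infty_is_lim, g_lim.
  - replace (e * g z) with (e * (g z - 0)) by ring.
    apply lim_infty_is_lim, (is_lim_scal_l _ _ _ (g z - 0)), is_lim_minus';
      [apply is_lim_const | apply lim_infty_is_lim, g_lim].
  - exists z; intros w Hw. apply lhopital_increment; auto; lra.
Qed.

Lemma lhopital_infty l :
  lim_infty (fun x => df x / dg x) l -> lim_infty (fun x => f x / g x) l.
Proof.
  intros Hl eps Heps.
  destruct (Hl (eps / 2) ltac:(lra)) as [M HM].
  exists (Rmax a M); intros z Hz.
  assert (Ha : a <= z) by (eapply Rle_trans; [apply Rmax_l | exact Hz]).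
  assert (HMz : M <= z) by (eapply Rle_trans; [apply Rmax_r | exact Hz]).
  assert (Hbound : Rabs (f z - l * g z) <= eps / 2 * g z).
  { apply lhopital_bound; auto. intros c Hc. left; apply HM; lra. }
  assert (Hgz := lhopital_g_pos z Ha).
  replace (f z / g z - l) with ((f z - l * g z) / g z) by (field; lra).
  unfold Rdiv; rewrite Rabs_mult, (Rabs_pos_eq (/ g z)) by (left; apply Rinv_0_lt_compat, Hgz).
  apply Rmult_le_compat_r with (r := / g z) in Hbound; [| left; apply Rinv_0_lt_compat, Hgz].
  replace (eps / 2 * g z * / g z) with (eps / 2) in Hbound by (field; lra).
  lra.
Qed.

End LHopitalInfty.

(** * Consequences of (H1) and (H2) *)

Section InverseOfq.

Variables q dq : R -> R.
Hypothesis q_deriv : forall x, 0 <= x -> derivable_pt_lim q x (dq x).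
Hypothesis q_infty : tends_infty q.
Hypothesis dq_small : lim_infty (fun x => dq x / q x ^ 2) 0.

Variable a : R.
Hypothesis a_nonneg : 0 <= a.
Hypothesis q_gt1 : forall x, a <= x -> 1 < q x.

Lemma q_ne0 x : a <= x -> q x <> 0.
Proof. intros Hx; specialize (q_gt1 x Hx); lra. Qed.

Lemma q_continuous x : 0 <= x -> continuous q x.
Proof. intros Hx. apply (continuous_of_derivable_pt_lim _ _ (dq x)), q_deriv, Hx. Qed.

Lemma inv_q_derivable x : a <= x -> derivable_pt_lim (fun x => / q x) x (- dq x / q x ^ 2).
Proof.
  intros Hx. apply is_derive_Reals, is_derive_inv.
  - apply is_derive_Reals, q_deriv; lra.
  - apply q_ne0, Hx.
Qed.

Lemma inv_q_pos x : a <= x -> 0 < / q x.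
Proof. intros Hx. apply Rinv_0_lt_compat. specialize (q_gt1 x Hx); lra. Qed.

Lemma inv_q_cube_pos x : a <= x -> 0 < / q x ^ 3.
Proof. intros Hx. apply Rinv_0_lt_compat, pow_lt. specialize (q_gt1 x Hx); lra. Qed.

Lemma inv_q_continuous x : a <= x -> continuous (fun x => / q x) x.
Proof. intros Hx. exact (continuous_of_derivable_pt_lim _ _ _ (inv_q_derivable x Hx)). Qed.

Lemma inv_q_cube_continuous x : a <= x -> continuous (fun x => / q x ^ 3) x.
Proof.
  intros Hx. apply (continuous_of_derivable_pt_lim _ _ (- (3 * dq x * q x ^ 2) / (q x ^ 3) ^ 2)).
  apply is_derive_Reals, is_derive_inv.
  - replace (3 * dq x * q x ^ 2) with (INR 3 * dq x * q x ^ Nat.pred 3) by (simpl; ring).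
    apply is_derive_pow, is_derive_Reals, q_deriv; lra.
  - apply pow_nonzero, q_ne0, Hx.
Qed.

(* The mean value theorem for [1/q], whose derivative [-q'/q^2] is eventually below [eps]. *)
Lemma inv_q_ge_half eps : 0 < eps ->
  exists Z, a <= Z /\
    forall y x, Z <= y -> y <= x <= y + / (2 * eps * q y) -> / (2 * q y) <= / q x.
Proof.
  intros Heps. destruct (dq_small eps Heps) as [M HM].
  exists (Rmax M a); split; [apply Rmax_r |]. intros y x Hy Hx.
  assert (HMy : M <= y) by (eapply Rle_trans; [apply Rmax_l | exact Hy]).
  assert (Hay : a <= y) by (eapply Rle_trans; [apply Rmax_r | exact Hy]).
  destruct (mean_value (fun x => / q x) (fun x => - dq x / q x ^ 2) y x) as [c [Hc Heq]];
    [lra | intros; apply inv_q_derivable; lra |].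
  specialize (HM c ltac:(lra)). rewrite Rminus_0_r in HM. apply Rabs_def2 in HM.
  assert (Hqy := q_gt1 y Hay).
  assert (Hvar : dq c / q c ^ 2 * (x - y) <= eps * / (2 * eps * q y)).
  { apply Rle_trans with (eps * (x - y)); [apply Rmult_le_compat_r | apply Rmult_le_compat_l]; lra. }
  replace (eps * / (2 * eps * q y)) with (/ q y - / (2 * q y)) in Hvar by (field; lra).
  unfold Rdiv in *. lra.
Qed.

Lemma q_le_double :
  exists Z, a <= Z /\ forall y x, Z <= y -> y <= x <= y + / q y -> q x <= 2 * q y.
Proof.
  destruct (inv_q_ge_half (/ 2)) as [Z [HZ HU]]; [lra |].
  exists Z; split; auto. intros y x Hy Hx.
  assert (Hqy := q_gt1 y ltac:(lra)). assert (Hqx := q_gt1 x ltac:(lra)).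
  assert (Hi := HU y x Hy ltac:(replace (2 * / 2 * q y) with (q y) by field; lra)).
  apply Rinv_le_contravar in Hi; [rewrite !Rinv_inv in Hi; lra | apply Rinv_0_lt_compat; lra].
Qed.

Lemma gamma_increment x y : 0 <= y <= x -> gamma q x - gamma q y = 2 * RInt q y x.
Proof.
  intros Hxy. unfold gamma.
  assert (q_ex : forall b, 0 <= b -> ex_RInt q 0 b)
    by (intros; apply ex_RInt_continuous_ge; [exact q_continuous | lra]).
  rewrite !Rint_RInt, (RInt_Chasles_minus q 0 y x) by (apply q_ex || idtac; lra).
  ring.
Qed.

Lemma exp_gamma_Iinf_lower :
  (forall y, 0 <= y -> exists L, improper_int (fun xi => exp (- gamma q xi)) y L) ->
  exists Z, a <= Z /\ forall y, Z <= y ->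
    exp (-4) * / q y <= exp (gamma q y) * Iinf (fun xi => exp (- gamma q xi)) y.
Proof.
  intros Hint. destruct q_le_double as [Z [HZ Hdouble]].
  exists Z; split; auto. intros y Hy.
  assert (Hqy := q_gt1 y ltac:(lra)).
  set (h := / q y).
  assert (Hh : 0 < h) by (apply Rinv_0_lt_compat; lra).
  destruct (Hint y ltac:(lra)) as [L HL].
  set (E := fun xi => exp (- gamma q xi)).
  assert (E_ex : ex_RInt E y (y + h)) by (apply (improper_int_ex_RInt E y L); auto; lra).
  assert (Hlow : h * exp (- gamma q y - 4) <= RInt E y (y + h)).
  { replace h with (y + h - y) at 1 by ring.
    apply RInt_ge_const; auto; [lra |].
    intros xi Hxi. unfold E.
    enough (Hexp : - gamma q y - 4 <= - gamma q xi)
      by (destruct Hexp as [Hlt | ->]; [left; apply exp_increasing, Hlt | right; reflexivity]).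
    assert (Hinc := gamma_increment xi y ltac:(lra)).
    assert (RInt q y xi <= (xi - y) * (2 * q y)).
    { apply RInt_le_const; [lra | apply (ex_RInt_Chasles_2 q 0); [lra |] |].
      - apply ex_RInt_continuous_ge; [exact q_continuous | lra].
      - intros x Hx. apply (Hdouble y x); unfold h in Hxi; lra. }
    assert ((xi - y) * (2 * q y) <= h * (2 * q y)) by (apply Rmult_le_compat_r; lra).
    replace (h * (2 * q y)) with 2 in * by (unfold h; field; lra).
    lra. }
  assert (RInt E y (y + h) <= L) by (apply (RInt_le_improper E y); auto;
    [intros; left; apply exp_pos | intros; eapply improper_int_ex_RInt; eauto | lra]).
  rewrite (Iinf_eq E y L HL).
  replace (exp (-4) * h) with (exp (gamma q y) * (h * exp (- gamma q y - 4))).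
  - apply Rmult_le_compat_l; [left; apply exp_pos | lra].
  - replace (- gamma q y - 4) with (-4 + - gamma q y) by ring.
    rewrite exp_plus, exp_Ropp. field. apply Rgt_not_eq, exp_pos.
Qed.

Lemma inv_q_improper : H1 q -> exists c L, a <= c /\ improper_int (fun x => / q x) c L.
Proof.
  intros [Hint [LF HF]].
  destruct (exp_gamma_Iinf_lower Hint) as [c [Hac Hlow]].
  destruct (improper_int_of_le_scal (fun x => / q x)
              (fun y => exp (gamma q y) * Iinf (fun xi => exp (- gamma q xi)) y) 0 c (exp 4) LF)
    as [L HL]; try lra; auto.
  - left; apply exp_pos.
  - intros x Hx. apply Rmult_le_pos; [left; apply exp_pos |].
    destruct (Hint x Hx) as [Lx HLx].
    apply (Iinf_nonneg _ x Lx); [intros; left; apply exp_pos | exact HLx | lra].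
  - intros x Hx. apply inv_q_continuous; lra.
  - intros x Hx. split; [left; apply inv_q_pos; lra |].
    apply Rmult_le_reg_l with (exp (-4)); [apply exp_pos |].
    rewrite <- Rmult_assoc, <- exp_plus, (Rplus_comm (-4)), Rplus_opp_r, exp_0, Rmult_1_l.
    apply Hlow; lra.
  - exists c, L; auto.
Qed.

Variable L : R.
Hypothesis inv_q_int : improper_int (fun x => / q x) a L.

Local Notation I1 := (Iinf (fun x => / q x)).
Local Notation I3 := (Iinf (fun x => / q x ^ 3)).

Lemma Iinf_inv_q_nonneg z : a <= z -> 0 <= I1 z.
Proof. apply (Iinf_nonneg _ a L); auto. intros; left; apply inv_q_pos; lra. Qed.

Lemma inv_q_cube_improper : exists L3, improper_int (fun x => / q x ^ 3) a L3.
Proof.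
  apply (improper_int_of_le_scal _ (fun x => / q x) a a 1 L); try lra; auto.
  - intros x Hx; left; apply inv_q_pos, Hx.
  - exact inv_q_cube_continuous.
  - intros x Hx. split; [left; apply inv_q_cube_pos, Hx |].
    assert (Hqx := q_gt1 x Hx). rewrite Rmult_1_l.
    apply Rinv_le_contravar; [lra |]. simpl; nra.
Qed.

Lemma q_sqr_Iinf_inv_q_infty : tends_infty (fun z => q z ^ 2 * I1 z).
Proof.
  intros A. assert (HA := Rabs_pos A). set (eps := / (4 * (Rabs A + 1))).
  assert (Heps : 0 < eps) by (apply Rinv_0_lt_compat; lra).
  destruct (inv_q_ge_half eps Heps) as [Z [HZ Hhalf]].
  exists Z. intros z Hz. assert (Hqz := q_gt1 z ltac:(lra)).
  set (h := / (2 * eps * q z)).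
  assert (Hh : 0 < h) by (apply Rinv_0_lt_compat; nra).
  assert (Hlow : h * / (2 * q z) <= I1 z).
  { apply Rle_trans with (RInt (fun x => / q x) z (z + h)).
    - replace h with (z + h - z) at 1 by ring.
      apply RInt_ge_const; [lra | apply ex_RInt_continuous_ge; [intros; apply inv_q_continuous |]; lra |].
      intros x Hx. apply Hhalf; [lra | exact Hx].
    - apply (RInt_le_Iinf _ a L); auto; [intros; left; apply inv_q_pos |]; lra. }
  assert (Hval : q z ^ 2 * (h * / (2 * q z)) = Rabs A + 1) by (unfold h, eps; field; lra).
  assert (q z ^ 2 * (h * / (2 * q z)) <= q z ^ 2 * I1 z) by (apply Rmult_le_compat_l; [nra | lra]).
  assert (Hr := Rle_abs A). lra.
Qed.

Lemma dq_Iinf_inv_q_lim_nonneg b : lim_infty (fun z => dq z * I1 z) b -> 0 <= b.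
Proof.
  intros Hb. apply Rnot_lt_le; intros Hneg.
  destruct (Hb (- b / 2)) as [M HM]; [lra |].
  set (Z := Rmax M a).
  assert (dq_neg : forall x, Z <= x -> dq x < 0).
  { intros x Hx.
    specialize (HM x ltac:(eapply Rle_trans; [apply Rmax_l | exact Hx])).
    assert (0 <= I1 x) by (apply Iinf_inv_q_nonneg; eapply Rle_trans; [apply Rmax_r | exact Hx]).
    apply Rabs_def2 in HM. nra. }
  destruct (q_infty (q Z)) as [M' HM'].
  assert (q (Rmax M' (Z + 1)) < q Z).
  { apply (derivable_neg_decreasing q dq Z); auto.
    - intros c Hc; apply q_deriv. unfold Z in Hc; assert (Hr := Rmax_r M a); lra.
    - split; [lra | eapply Rlt_le_trans; [| apply Rmax_r]; lra]. }
  specialize (HM' _ (Rmax_l M' (Z + 1))). lra.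
Qed.

Lemma dq_div_q_sqrt_Iinf_lim0 b : lim_infty (fun z => dq z * I1 z) b ->
  lim_infty (fun z => dq z / q z * sqrt (I1 z)) 0.
Proof.
  intros Hb. apply lim_infty_of_sqr.
  destruct (q_sqr_Iinf_inv_q_infty 0) as [Z HZ].
  apply (lim_infty_ext_ge (fun z => (dq z * I1 z) * (dq z * I1 z) * / (q z ^ 2 * I1 z)) _ (Rmax Z a)).
  - intros z Hz.
    assert (HqI := HZ z ltac:(eapply Rle_trans; [apply Rmax_l | exact Hz])).
    assert (Hq := q_gt1 z ltac:(eapply Rle_trans; [apply Rmax_r | exact Hz])).
    assert (HI : 0 < I1 z) by nra.
    replace ((dq z / q z * sqrt (I1 z)) ^ 2) with ((dq z / q z) ^ 2 * sqrt (I1 z) ^ 2) by ring.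
    rewrite pow2_sqrt by lra. field; lra.
  - apply lim_infty_is_lim.
    replace (Finite 0) with (Rbar_mult (b * b) (Rbar_inv p_infty)) by (simpl; f_equal; ring).
    apply is_lim_mult; [| | simpl; auto].
    + apply lim_infty_is_lim in Hb. apply (is_lim_mult _ _ _ b b Hb Hb); simpl; auto.
    + apply is_lim_inv; [| discriminate]. apply tends_infty_is_lim, q_sqr_Iinf_inv_q_infty.
Qed.

Lemma Iinf_div_q_sqr_derivable x : a < x ->
  derivable_pt_lim (fun z => I1 z / q z ^ 2) x (- / q x ^ 3 * (1 + 2 * (dq x * I1 x))).
Proof.
  intros Hx. apply is_derive_Reals.
  assert (HI := Iinf_derivable _ a L inv_q_int inv_q_continuous x Hx).
  assert (Hq2 : is_derive (fun y => q y ^ 2) x (INR 2 * dq x * q x ^ Nat.pred 2))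
    by (apply is_derive_pow, is_derive_Reals, q_deriv; lra).
  replace (- / q x ^ 3 * (1 + 2 * (dq x * I1 x)))
    with ((- / q x * q x ^ 2 - I1 x * (INR 2 * dq x * q x ^ Nat.pred 2)) / (q x ^ 2) ^ 2)
    by (simpl; field; apply q_ne0; lra).
  apply is_derive_div; [apply is_derive_Reals, HI | exact Hq2 |].
  apply pow_nonzero, q_ne0; lra.
Qed.

Lemma Iinf_div_q_sqr_lim0 : lim_infty (fun z => I1 z / q z ^ 2) 0.
Proof.
  apply lim_infty_is_lim.
  replace (Finite 0) with (Rbar_mult 0 (Rbar_inv p_infty)) by (simpl; f_equal; ring).
  apply is_lim_mult; [| | simpl; auto].
  - apply lim_infty_is_lim, (Iinf_lim0 _ a L inv_q_int).
  - apply is_lim_inv; [| discriminate].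
    apply (is_lim_ext (fun z => q z * q z)); [intros; ring |].
    assert (Hq := proj1 (tends_infty_is_lim q) q_infty).
    exact (is_lim_mult _ _ _ p_infty p_infty Hq Hq I).
Qed.

Lemma Iinf_ratio_lim b : lim_infty (fun z => dq z * I1 z) b ->
  lim_infty (fun z => I1 z / (q z ^ 2 * I3 z)) (2 * b + 1).
Proof.
  intros Hb. destruct inv_q_cube_improper as [L3 HL3].
  apply (lim_infty_ext_ge (fun z => I1 z / q z ^ 2 / I3 z) _ a);
    [intros; unfold Rdiv; rewrite Rinv_mult; ring |].
  apply (lhopital_infty _ _ (fun z => - / q z ^ 3 * (1 + 2 * (dq z * I1 z)))
           (fun z => - / q z ^ 3) (a + 1)).
  - intros x Hx. apply Iinf_div_q_sqr_derivable; lra.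
  - intros x Hx. apply (Iinf_derivable _ a L3 HL3 inv_q_cube_continuous); lra.
  - intros x Hx. assert (Hpos := inv_q_cube_pos x ltac:(lra)); lra.
  - exact Iinf_div_q_sqr_lim0.
  - exact (Iinf_lim0 _ a L3 HL3).
  - apply (lim_infty_ext_ge (fun z => 1 + 2 * (dq z * I1 z)) _ a).
    + intros x Hx. field. apply q_ne0, Hx.
    + replace (2 * b + 1) with (1 + 2 * b) by ring. apply lim_infty_is_lim.
      apply is_lim_plus'; [apply is_lim_const |].
      apply (is_lim_scal_l _ 2 _ b), lim_infty_is_lim, Hb.
Qed.

End InverseOfq.

Theorem mainTheorem14 (q dq : R -> R)
  (Hderiv : forall x, 0 <= x -> derivable_pt_lim q x (dq x))
  (Hcont : forall x, 0 <= x -> continuity_pt dq x)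
  (HH1 : H1 q) (HH2 : H2 q dq)
  (b : R)
  (Hb : lim_infty (fun z => dq z * Iinf (fun x => / q x) z) b) :
  0 <= b /\
  lim_infty (fun z => dq z / q z * sqrt (Iinf (fun x => / q x) z)) 0 /\
  lim_infty (fun z => Iinf (fun x => / q x) z /
                      ((q z)^2 * Iinf (fun x => / (q x)^3) z)) (2 * b + 1).
Proof.
  destruct HH2 as [q_infty dq_small].
  destruct (q_infty 1) as [M HM].
  assert (q_gt1 : forall x, Rmax 0 M <= x -> 1 < q x)
    by (intros x Hx; apply HM; eapply Rle_trans; [apply Rmax_r | exact Hx]).
  destruct (inv_q_improper q dq Hderiv dq_small _ (Rmax_l 0 M) q_gt1 HH1) as [a [L [Ha HL]]].
  assert (a_nonneg : 0 <= a) by (eapply Rle_trans; [apply Rmax_l | exact Ha]).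
  assert (q_gt1_a : forall x, a <= x -> 1 < q x) by (intros; apply q_gt1; lra).
  split; [| split].
  - exact (dq_Iinf_inv_q_lim_nonneg q dq Hderiv q_infty a a_nonneg q_gt1_a L HL b Hb).
  - exact (dq_div_q_sqrt_Iinf_lim0 q dq Hderiv dq_small a a_nonneg q_gt1_a L HL b Hb).
  - exact (Iinf_ratio_lim q dq Hderiv q_infty a a_nonneg q_gt1_a L HL b Hb).
Qed.
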